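(* Let $\Gamma=\Gamma_1+\cdots+\Gamma_n$ be the disjoint union of labeled graphs $\Gamma_i$ with $V_i$ vertices, $\Gamma_i\neq\Gamma_j$ for $i\neq j$, where $\Gamma$ has $V=V_1+\cdots+V_n$ vertices labeled so that the vertices of $\Gamma_1$ come first, then those of $\Gamma_2$, etc., each block keeping its internal order. Then $$c_\Gamma=\frac{V!}{V_1!\cdots V_n!}\,c_{\Gamma_1}\cdots c_{\Gamma_n}.$$
   Context: A labeled graph with $V$ vertices and $E$ edges is a map $s:\{1,\ldots,E\}\to\mathcal{P}_2\{1,\ldots,V\}$. Each edge with $s(e)=\{i,j\}$, $i<j$, is oriented $i\to j$. Define $c_\Gamma:=\sum_{\sigma\in S_V}\prod_{e:\,i\to j}\operatorname{sign}(\sigma(j)-\sigma(i))$. *)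

From mathcomp Require Import all_boot all_order all_fingroup all_algebra.
Set Implicit Arguments. Unset Strict Implicit. Unset Printing Implicit Defensive.
Import Order.TTheory GRing.Theory Num.Theory.

(* A labeled graph with V vertices and E edges: s maps each edge e : 'I_E to a
   2-element subset {i,j} of the vertices 'I_V, recorded as the pair (i,j) with
   i < j (the orientation i -> j). *)
Record lgraph := LGraph {
  gV : nat;
  gE : nat;
  gs : 'I_gE -> 'I_gV * 'I_gV;
  gs_ok : forall e, (gs e).1 < (gs e).2 }.

Definition cG (G : lgraph) : int :=
  \sum_(s : 'S_(gV G))
     \prod_(e < gE G) sgz ((s (gs e).2)%:Z - (s (gs e).1)%:Z).

Definition gunion_s (G H : lgraph) (e : 'I_(gE G + gE H)) :
  'I_(gV G + gV H) * 'I_(gV G + gV H) :=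
  match split e with
  | inl e1 => (lshift (gV H) (gs e1).1, lshift (gV H) (gs e1).2)
  | inr e2 => (rshift (gV G) (gs e2).1, rshift (gV G) (gs e2).2)
  end.

Lemma gunion_ok (G H : lgraph) e : (@gunion_s G H e).1 < (@gunion_s G H e).2.
Proof.
rewrite /gunion_s; case: split => x /=; first exact: gs_ok.
by rewrite ltn_add2l gs_ok.
Qed.

Definition gunion (G H : lgraph) : lgraph :=
  LGraph (@gunion_ok G H).

Definition gempty : lgraph :=
  @LGraph 0 0 (fun e => match e with Ordinal _ h => False_rect _ (notF h) end)
    (fun e => match e with Ordinal _ h => False_rect _ (notF h) end).

Definition gunion_big (n : nat) (G : 'I_n -> lgraph) : lgraph :=
  foldr gunion gempty [seq G i | i <- enum 'I_n].

(* A permutation s of the vertices of G + H is determined by the set A of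
   positions that s assigns to the vertices of G together with the relative
   order of those positions and the relative order of the positions of the
   vertices of H, i.e. by A and two permutations in S_(V_G) and S_(V_H).
   Since every edge of G + H lies inside one block, the weight of s is the
   product of the weights of these two "patterns"; summing over the
   'C(V_G + V_H, V_G) choices of A gives c_(G+H) = 'C(V_G + V_H, V_G) c_G c_H,
   and the theorem follows by induction on the number of summands. *)
From mathcomp Require Import all_boot all_order all_fingroup all_algebra.
From mathcomp Require Import ring.
Import Order.TTheory GRing.Theory Num.Theory.

Lemma sgz_subn (x y : nat) : sgz (x%:Z - y%:Z)%R = ((y < x)%:Z - (x < y)%:Z)%R.
Proof.
case: (ssrnat.ltngtP x y) => [lt_xy|lt_yx|->]; last by rewrite subrr.
- by apply/eqP; rewrite sgz_cp0 subr_lt0 ltz_nat.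
- by apply/eqP; rewrite sgz_cp0 subr_gt0 ltz_nat.
Qed.

Section Rank.
Context {k : nat} (f : 'I_k -> nat).

Lemma rank_subproof i : #|[set j | f j < f i]| < k.
Proof.
rewrite -[k in _ < k]card_ord -cardsT; apply: proper_card.
by rewrite properT; apply/negP => /eqP/setP/(_ i); rewrite !inE ltnn.
Qed.

Definition rank i : 'I_k := Ordinal (rank_subproof i).

Hypothesis f_inj : injective f.

Lemma ltn_rank i j : (rank i < rank j) = (f i < f j).
Proof.
have rank_mono u v : f u < f v -> rank u < rank v.
  move=> lt_uv; apply: proper_card; apply/properP; split.
    by apply/subsetP => x; rewrite !inE => /ltn_trans; apply.
  by exists u; rewrite !inE ?ltnn.
case: (ssrnat.ltngtP (f i) (f j)) => [/rank_mono //|/rank_mono/ltnW|/f_inj->].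
  by rewrite leqNgt => /negbTE.
by rewrite ltnn.
Qed.

Lemma rank_inj : injective rank.
Proof.
move=> i j eq_ij; apply: f_inj.
by case: (ssrnat.ltngtP (f i) (f j)) => //; rewrite -ltn_rank eq_ij ltnn.
Qed.

End Rank.

Section RankImage.
Context {k N : nat}.

Lemma rank_imset (g : 'I_k -> 'I_N) : injective g -> forall i,
  rank (val \o g) i = #|[set y in g @: setT | y < g i]| :> nat.
Proof.
move=> g_inj i; rewrite /= -(card_imset _ g_inj); apply: eq_card => y.
rewrite !inE; apply/imsetP/andP => [[x]|[/imsetP[x _ ->] lt_x]].
  by rewrite inE => lt_x ->; rewrite imset_f.
by exists x; rewrite ?inE.
Qed.

(* An element of A is recovered from the number of elements of A below it. *)
Lemma eq_of_imset_rank (g h : 'I_k -> 'I_N) : injective g -> injective h ->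
  g @: setT = h @: setT -> rank (val \o g) =1 rank (val \o h) -> g =1 h.
Proof.
move=> g_inj h_inj eq_gh eq_rank i.
have := congr1 (@nat_of_ord k) (eq_rank i).
rewrite (rank_imset _ g_inj) (rank_imset _ h_inj) -eq_gh.
have below_mono x y : x \in g @: setT -> x < y ->
    #|[set z in g @: setT | z < x]| < #|[set z in g @: setT | z < y]|.
  move=> xA lt_xy; apply: proper_card; apply/properP; split.
    by apply/subsetP => z; rewrite !inE => /andP[-> /ltn_trans]; apply.
  by exists x; rewrite !inE ?ltnn ?xA.
have gA : g i \in g @: setT by rewrite imset_f.
have hA : h i \in g @: setT by rewrite eq_gh imset_f.
case: (ssrnat.ltngtP (g i) (h i)) => [lt_gh|lt_hg|/val_inj //] eq_card.
  by have := below_mono _ _ gA lt_gh; rewrite eq_card ltnn.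
by have := below_mono _ _ hA lt_hg; rewrite eq_card ltnn.
Qed.

End RankImage.

Definition weight (G : lgraph) (f : 'I_(gV G) -> nat) : int :=
  \prod_(e < gE G) sgz ((f (gs e).2)%:Z - (f (gs e).1)%:Z).

Lemma cGE (G : lgraph) : cG G = (\sum_(s : 'S_(gV G)) weight G (fun i => s i))%R.
Proof. by []. Qed.

Lemma eq_weight_order (G : lgraph) (f g : 'I_(gV G) -> nat) :
  (forall i j, (f i < f j) = (g i < g j)) -> weight G f = weight G g.
Proof. by move=> eq_fg; apply: eq_bigr => e _; rewrite !sgz_subn !eq_fg. Qed.

Lemma weight_rank (G : lgraph) (f : 'I_(gV G) -> nat) :
  injective f -> weight G f = weight G (fun i => rank f i).
Proof. by move=> f_inj; apply: eq_weight_order => i j; rewrite (ltn_rank _ f_inj). Qed.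

Lemma weight_gunion (G H : lgraph) (f : 'I_(gV G + gV H) -> nat) :
  weight (gunion G H) f =
  (weight G (fun i => f (lshift _ i)) * weight H (fun j => f (rshift _ j)))%R.
Proof.
rewrite /weight big_split_ord /=; congr (_ * _)%R; apply: eq_bigr => e _.
  by rewrite /gunion_s (unsplitK (inl e : 'I_(gE G) + 'I_(gE H))).
by rewrite /gunion_s (unsplitK (inr e : 'I_(gE G) + 'I_(gE H))).
Qed.

Section SplitPerm.
Context {a b : nat}.
Implicit Type s : 'S_(a + b).

Definition lblock s (i : 'I_a) := s (lshift b i).
Definition rblock s (j : 'I_b) := s (rshift a j).

Lemma lblock_inj s : injective (lblock s).
Proof. by move=> i j /perm_inj/lshift_inj. Qed.

Lemma rblock_inj s : injective (rblock s).
Proof. by move=> i j /perm_inj/rshift_inj. Qed.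

Definition lpattern s : 'S_a := perm (rank_inj _ (inj_comp val_inj (lblock_inj s))).
Definition rpattern s : 'S_b := perm (rank_inj _ (inj_comp val_inj (rblock_inj s))).

Definition perm_split s := (lblock s @: setT, (lpattern s, rpattern s)).

Lemma rblock_imset s : rblock s @: setT = ~: (lblock s @: setT).
Proof.
apply/setP => x; rewrite inE -(permKV s x) -(splitK (s^-1%g x)).
case: split => [i|j] /=.
  rewrite (imset_f (lblock s) (in_setT i)); apply/imsetP => -[j _ /perm_inj/eqP].
  by rewrite eq_lrshift.
rewrite (imset_f (rblock s) (in_setT j)); apply/esym/negP => /imsetP[i _ /perm_inj/eqP].
by rewrite eq_rlshift.
Qed.

Lemma perm_split_inj : injective perm_split.
Proof.
move=> s s' [eq_l /permP eq_lp /permP eq_rp]; apply/permP => x.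
rewrite -(splitK x); case: split => [i|j] /=.
  apply: (eq_of_imset_rank _ _ (lblock_inj s) (lblock_inj s') eq_l) => k.
  by have := eq_lp k; rewrite !permE.
have eq_r : rblock s @: setT = rblock s' @: setT by rewrite !rblock_imset eq_l.
apply: (eq_of_imset_rank _ _ (rblock_inj s) (rblock_inj s') eq_r) => k.
by have := eq_rp k; rewrite !permE.
Qed.

(* Surjectivity by counting: (a + b)! = 'C(a + b, a) * a! * b!. *)
Lemma imset_perm_split :
  perm_split @: setT = setX [set A : {set 'I_(a + b)} | #|A| == a] setT.
Proof.
apply/eqP; rewrite eqEcard; apply/andP; split.
  apply/subsetP => _ /imsetP[s _ ->]; rewrite in_setX !inE andbT.
  by rewrite card_imset ?cardsT ?card_ord //; apply: lblock_inj.
rewrite cardsX card_draws cardsT card_prod !card_Sn card_ord.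
rewrite card_imset ?cardsT ?card_Sn; last exact: perm_split_inj.
by rewrite -(bin_fact (leq_addr b a)) addKn.
Qed.

End SplitPerm.

Local Open Scope ring_scope.

Lemma cG_gunion (G H : lgraph) :
  cG (gunion G H) = 'C(gV G + gV H, gV G)%:R * cG G * cG H.
Proof.
pose F (y : {set 'I_(gV G + gV H)} * ('S_(gV G) * 'S_(gV H))) :=
  weight G (fun i => y.2.1 i) * weight H (fun j => y.2.2 j).
have -> : cG (gunion G H) = \sum_(s : 'S_(gV G + gV H)) F (perm_split s).
  rewrite cGE; apply: eq_bigr => s _; rewrite weight_gunion.
  rewrite (weight_rank _ _ (inj_comp val_inj (lblock_inj s))).
  rewrite (weight_rank _ _ (inj_comp val_inj (rblock_inj s))).
  by congr (_ * _); apply: eq_weight_order => i j; rewrite /= !permE.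
have <- : \sum_(y in setX [set A : {set _} | #|A| == gV G] setT) F y =
          \sum_(s : 'S_(gV G + gV H)) F (perm_split s).
  rewrite -imset_perm_split big_imset; last exact: in2W perm_split_inj.
  by apply: eq_bigl => s; rewrite inE.
have -> : \sum_(y in setX [set A : {set _} | #|A| == gV G] setT) F y =
          \sum_(A : {set 'I_(gV G + gV H)} | #|A| == gV G) cG G * cG H.
  transitivity (\sum_(A : {set 'I_(gV G + gV H)} | #|A| == gV G) \sum_pq F (A, pq)).
    rewrite pair_big_dep.
    by apply: eq_big => [[A pq]|[A pq] _]; rewrite ?in_setX ?inE ?andbT.
  by apply: eq_bigr => A _; rewrite !cGE big_distrlr pair_big.
have := card_draws 'I_(gV G + gV H) (gV G); rewrite cardsE card_ord => <-.
by rewrite sumr_const -mulrA mulr_natl.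
Qed.

Lemma cG_gempty : cG gempty = 1.
Proof.
by rewrite /cG (eq_bigr (fun _ => 1)) ?sumr_const ?card_Sn // => s _; rewrite big_ord0.
Qed.

Lemma gV_foldr_gunion (l : seq lgraph) :
  gV (foldr gunion gempty l) = (\sum_(g <- l) gV g)%N.
Proof. by elim: l => [|g l IHl]; rewrite ?big_nil ?big_cons //= IHl. Qed.

Lemma cG_foldr_gunion (l : seq lgraph) :
  cG (foldr gunion gempty l) * (\prod_(g <- l) (gV g)`!)%N%:R =
  (\sum_(g <- l) gV g)`!%:R * \prod_(g <- l) cG g.
Proof.
elim: l => [|g l IHl]; first by rewrite !big_nil cG_gempty mulr1.
rewrite /= cG_gunion !big_cons /= gV_foldr_gunion.
set cF := cG _ in IHl *; set V := (\sum_(j <- l) gV j)%N in IHl *.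
have := bin_fact (leq_addr V (gV g)); rewrite addKn => <-; rewrite !natrM.
transitivity ('C(gV g + V, gV g)%:R * (gV g)`!%:R * cG g *
              (cF * (\prod_(j <- l) (gV j)`!)%:R)); first by ring.
by rewrite IHl; ring.
Qed.

Theorem mainTheorem9 (n : nat) (G : 'I_n -> lgraph) :
  (forall i j : 'I_n, i != j -> G i <> G j) ->
  (cG (gunion_big G))%:~R =
    ((\sum_(i < n) gV (G i))`!)%:R / (\prod_(i < n) (gV (G i))`!)%:R
      * \prod_(i < n) (cG (G i))%:~R :> rat.
Proof.
(* The formula does not need the summands to be pairwise distinct. *)
move=> _.
have fact_neq0 : (\prod_(i < n) (gV (G i))`!)%N%:R != 0 :> rat.
  by rewrite pnatr_eq0 -lt0n prodn_gt0 // => i; apply: fact_gt0.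
apply: (mulIf fact_neq0); rewrite mulrAC divfK //.
have := congr1 (intmul (1 : rat)) (cG_foldr_gunion [seq G i | i <- enum 'I_n]).
by rewrite !big_map !intrM !mulrz_nat rmorph_prod => ->; rewrite rmorph_prod.
Qed.
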